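(* Assume $\gamma=0$, $L$ is conformal, and $r,s$ are not both roots of unity. Suppose $\mathcal S(r,s)$ is generated by $(jm,m)$ for some integers $j\ge0$, $m>0$ (so $s^m=r^{jm}$), and that $\psi(h)=Ch^j$ with $C\neq0$. Let $M$ be a simple $L$-module with $hM=HM=M$. If $H^m-C^mh^{jm}\in\operatorname{ann}M$, then $\operatorname{ann}M$ contains $u^m$ or $d^m$.
   Context: Let $r,s\in\mathbb C^\times$, $\phi\in\mathbb C[x]$, and $L=L(\phi,r,s,0)$ the associative $\mathbb C$-algebra generated by $u,d,h$ with $hu=ruh$, $dh=rhd$, $du-sud=\phi(h)$. $L$ is conformal if there is $\psi\in\mathbb C[x]$ with $s\psi(x)-\psi(rx)=\phi(x)$; fix such $\psi$ and set $H=ud+\psi(h)$. $\mathcal S(r,s)=\{(i,j)\in\mathbb Z\times\mathbb Z: r^i=s^j\}$, an additive subgroup of $\mathbb Z^2$, which is cyclic when $r,s$ are not both roots of unity. Modules are left modules. *)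

From HB Require Import structures.
From mathcomp Require Import all_boot all_order all_algebra.
Set Implicit Arguments. Unset Strict Implicit. Unset Printing Implicit Defensive.
Import Order.TTheory GRing.Theory Num.Theory.
Local Open Scope ring_scope.

Definition polyact (K : fieldType) (M : lmodType K) (p : {poly K})
  (f : M -> M) (x : M) : M :=
  \sum_(i < size p) p`_i *: iter i f x.

Definition is_root_of_unity (K : fieldType) (x : K) : Prop :=
  exists n : nat, (0 < n)%N /\ x ^+ n = 1.

Definition simple_rep (K : fieldType) (M : lmodType K) (U D Hh : M -> M) : Prop :=
  (exists x : M, x != 0) /\
  forall S : M -> Prop,
    S 0 ->
    (forall (a : K) (x y : M), S x -> S y -> S (a *: x + y)) ->
    (forall x, S x -> S (U x) /\ S (D x) /\ S (Hh x)) ->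
    (forall x, S x -> x = 0) \/ (forall x, S x).

From HB Require Import structures.
From mathcomp Require Import all_boot all_order all_algebra zify.
Import Order.TTheory GRing.Theory Num.Theory.
Local Open Scope ring_scope.
Set Implicit Arguments.
Unset Strict Implicit.

(* Write [H = ud + C h^j].  The relations give [dH = sHd], [hH = Hh] and
   [d^(k+1) u = s^(k+1) H d^k - C r^(j(k+1)) h^j d^k], so by induction [d^k u^k]
   is the two-variable homogeneous polynomial
   [prod_(i<k) (s^(i+1) X - C r^(j(i+1)) Y)] evaluated at [(H, h^j)].  As
   [S(r,s)] is generated by [(jm, m)], [r^j/s] is a primitive [m]-th root of
   unity; hence for [k = m] the product is a nonzero multiple of
   [X^m - C^m Y^m], and [d^m u^m] kills [M].  Moreover [r^(jm) = s^m] makes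
   [d^m u = s^m u d^m], so [ker d^m] is a submodule: by simplicity either
   [d^m = 0], or [d^m] is injective and then [u^m = 0]. *)


Section IterLinear.
Variables (K : fieldType) (M : lmodType K) (f : M -> M).
Hypotheses (fD : {morph f : x y / x + y}) (fZ : scalable f).

Lemma iter_morphD n : {morph iter n f : x y / x + y}.
Proof. by elim: n => [|n IH] x y //=; rewrite IH fD. Qed.

Lemma iter_scalable n : scalable (iter n f).
Proof. by elim: n => [|n IH] a x //=; rewrite IH fZ. Qed.

Lemma iter_scale_comm (g : M -> M) (c : K) :
  (forall x, f (g x) = c *: g (f x)) ->
  forall n x, iter n f (g x) = c ^+ n *: g (iter n f x).
Proof.
move=> fg; elim=> [|n IH] x /=; first by rewrite expr0 scale1r.
by rewrite IH fZ fg scalerA -exprSr.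
Qed.

End IterLinear.

Lemma natr_inj_pchar0 (R : idomainType) :
  has_pchar0 R -> injective (fun n : nat => n%:R : R).
Proof.
move=> /pcharf0P natf0 a b.
wlog ab : a b / (a <= b)%N => [W E|E].
  by case: (leqP a b) => [|/ltnW] /W ->.
have : (b - a)%:R == 0 :> R by rewrite natrB // E subrr.
by rewrite natf0 subn_eq0 => ba; apply/eqP; rewrite eqn_leq ab.
Qed.

Lemma poly_eval_eq0_pchar0 (R : idomainType) (p : {poly R}) :
  has_pchar0 R -> (forall x, p.[x] = 0) -> p = 0.
Proof.
move=> charR p0; apply/eqP/negPn/negP => pn0.
pose rs := [seq i%:R : R | i <- iota 0 (size p)].
have rs_roots : all (root p) rs by apply/allP => x _; apply/rootP.
have rs_uniq : uniq rs.
  by rewrite map_inj_uniq ?iota_uniq //; exact: natr_inj_pchar0.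
by have := max_poly_roots pn0 rs_roots rs_uniq; rewrite size_map size_iota ltnn.
Qed.

Lemma polyact_scaleXn (K : fieldType) (M : lmodType K) (c : K) (j : nat)
  (f : M -> M) (x : M) : polyact (c *: 'X^j) f x = c *: iter j f x.
Proof.
have [->|c_nz] := eqVneq c 0.
  by rewrite !scale0r /polyact size_poly0 big_ord0.
rewrite /polyact size_scale // size_polyXn big_ord_recr /= big1 ?add0r.
  by rewrite coefZ coefXn eqxx mulr1.
by move=> i _; rewrite coefZ coefXn (ltn_eqF (ltn_ord i)) mulr0 scale0r.
Qed.

Section HomogeneousAction.
Variables (K : fieldType) (M : lmodType K) (A B : M -> M).

Definition homog_act (p : {poly K}) (n : nat) (x : M) : M :=
  \sum_(k < n.+1) p`_k *: iter k A (iter (n - k) B x).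

Lemma homog_act_XnsubC (d c : K) n x : (0 < n)%N ->
  homog_act (d *: ('X^n - c%:P)) n x = d *: (iter n A x - c *: iter n B x).
Proof.
case: n => // n _; rewrite /homog_act big_ord_recr big_ord_recl /=.
rewrite big1 => [|i _]; last first.
  rewrite coefZ coefB coefXn coefC /bump leq0n add1n eqSS (ltn_eqF (ltn_ord i)).
  by rewrite subrr mulr0 scale0r.
rewrite !coefZ !coefB !coefXn !coefC /= eqxx subnn sub0r subr0 mulr1 addr0.
by rewrite scalerBr scalerA mulrN scaleNr addrC.
Qed.

Hypotheses (AD : {morph A : x y / x + y}) (AZ : scalable A).
Hypotheses (BD : {morph B : x y / x + y}) (BZ : scalable B).
Hypothesis AB : forall x, A (B x) = B (A x).

Lemma homog_actMXsubC (a b : K) (p : {poly K}) n x : (size p <= n.+1)%N ->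
  homog_act ((a *: 'X - b%:P) * p) n.+1 x =
  a *: A (homog_act p n x) - b *: B (homog_act p n x).
Proof.
move=> sp; rewrite /homog_act.
have A0 : A 0 = 0 by have := AZ 0 0; rewrite !scale0r.
have B0 : B 0 = 0 by have := BZ 0 0; rewrite !scale0r.
rewrite (big_morph A AD A0) (big_morph B BD B0) !scaler_sumr mulrBl.
under eq_bigr do rewrite coefB -scalerAl coefZ coefXM coefCM scalerBl.
rewrite sumrB; congr (_ - _).
  rewrite big_ord_recl /= mulr0 scale0r add0r; apply: eq_bigr => i _.
  by rewrite AZ scalerA /bump leq0n add1n subSS.
rewrite big_ord_recr /= (nth_default 0 sp) mulr0 scale0r addr0.
apply: eq_bigr => i _; rewrite BZ scalerA subSn ?(leq_ord i) //=.
have AB1 y : A (B y) = 1 *: B (A y) by rewrite scale1r AB.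
by rewrite (iter_scale_comm AZ AB1) expr1n scale1r.
Qed.

End HomogeneousAction.

Lemma dvd_order_prim_root (F : fieldType) (n : nat) (w : F) : (0 < n)%N ->
  (forall k, w ^+ k = 1 <-> (n %| k)%N) -> n.-primitive_root w.
Proof.
move=> n_gt0 wP; have wn1 : w ^+ n = 1 by apply/wP.
have [n' prim_w n'_dvd_n] := prim_order_exists n_gt0 wn1.
suff -> : n = n' by [].
by apply/eqP; rewrite eqn_dvd n'_dvd_n (wP n').1 ?(prim_expr_order prim_w).
Qed.

Lemma prod_XsubC_prim_root (F : fieldType) (n : nat) (w c : F) :
  n.-primitive_root w ->
  \prod_(i < n) ('X - (c * w ^+ i)%:P) = 'X^n - (c ^+ n)%:P.
Proof.
move=> prim_w; have n_gt0 := prim_order_gt0 prim_w.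
have [->|c_nz] := eqVneq c 0.
  under eq_bigr do rewrite mul0r subr0.
  by rewrite prodr_const card_ord expr0n gtn_eqF // subr0.
pose rs := [seq c * w ^+ i | i : 'I_n].
have := @all_roots_prod_XsubC _ ('X^n - (c ^+ n)%:P) rs.
rewrite lead_coefXnsubC // scale1r big_map big_enum => -> //.
- by rewrite size_XnsubC // size_map size_enum_ord.
- apply/allP => _ /mapP [i _ ->]; rewrite rootE !hornerE exprMn -exprM mulnC.
  by rewrite exprM (prim_expr_order prim_w) expr1n mulr1 subrr.
rewrite uniq_rootsE map_inj_uniq ?enum_uniq // => i k /(mulfI c_nz) /eqP.
by rewrite (eq_prim_root_expr prim_w) !modn_small // => /eqP /val_inj.
Qed.

Lemma prod_scaled_XsubC_prim_root (F : fieldType) (n : nat) (s rho c : F) :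
  s != 0 -> n.-primitive_root (rho / s) ->
  \prod_(i < n) (s ^+ i.+1 *: 'X - (c * rho ^+ i.+1)%:P) =
  (\prod_(i < n) s ^+ i.+1) *: ('X^n - (c ^+ n)%:P).
Proof.
set w := rho / s => s_nz prim_w.
have factorE i : s ^+ i.+1 *: 'X - (c * rho ^+ i.+1)%:P =
                 s ^+ i.+1 *: ('X - (c * w * w ^+ i)%:P).
  rewrite scalerBr scale_polyC -mulrA -exprS; congr (_ - _%:P).
  by rewrite expr_div_n mulrCA [s ^+ _ * _]mulrC divfK ?expf_neq0.
under eq_bigr do rewrite factorE.
rewrite scaler_prod prod_XsubC_prim_root // exprMn (prim_expr_order prim_w).
by rewrite mulr1.
Qed.

Lemma prim_root_of_lattice (F : fieldType) (r s : F) (j m : nat) :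
  s != 0 -> (0 < m)%N ->
  (forall i k : int, r ^ i = s ^ k <->
     exists t : int, i = t * (j * m)%N%:Z /\ k = t * m%:Z) ->
  m.-primitive_root (r ^+ j / s).
Proof.
move=> s_nz m_gt0 lattice; apply: dvd_order_prim_root => // k.
have -> : (r ^+ j / s) ^+ k = 1 <-> r ^ (j * k)%N%:Z = s ^ k%:Z.
  rewrite -!exprnP exprM expr_div_n; split=> [/divr1_eq //|->].
  by rewrite divff ?expf_neq0.
rewrite lattice; split=> [[t [_ kE]]|/dvdnP [q ->]].
  by apply/(@dvdzP m k); exists t.
by exists q%:Z; split; lia.
Qed.

Lemma simple_rep_ker_trivial (K : fieldType) (M : lmodType K)
    (U D Hh f : M -> M) :
  simple_rep U D Hh -> {morph f : x y / x + y} -> scalable f ->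
  (forall x, f x = 0 -> [/\ f (U x) = 0, f (D x) = 0 & f (Hh x) = 0]) ->
  (forall x, f x = 0 -> x = 0) \/ (forall x, f x = 0).
Proof.
move=> [_ simpleM] fD fZ ker_stable.
apply: simpleM => [|a x y fx fy|x /ker_stable[]//].
  by have := fZ 0 0; rewrite !scale0r.
by rewrite fD fZ fx fy scaler0 addr0.
Qed.

Section ConformalMonomial.
Variables (K : fieldType) (r s C : K) (j : nat) (M : lmodType K).
Variables (U D Hh : {linear M -> M}).
Hypothesis r_nz : r != 0.
Hypothesis rel_hu : forall x, Hh (U x) = r *: U (Hh x).
Hypothesis rel_dh : forall x, D (Hh x) = r *: Hh (D x).
Hypothesis rel_du :
  forall x, D (U x) - s *: U (D x) = (C * (s - r ^+ j)) *: iter j Hh x.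

Definition Hpsi x := U (D x) + C *: iter j Hh x.

Let hjD : {morph iter j Hh : x y / x + y} := iter_morphD (linearD Hh) j.
Let hjZ : scalable (iter j Hh) := iter_scalable (linearZZ Hh) j.

Lemma HpsiD : {morph Hpsi : x y / x + y}.
Proof. by move=> x y; rewrite /Hpsi !linearD hjD scalerDr addrACA. Qed.

Lemma HpsiZ : scalable Hpsi.
Proof. by move=> a x; rewrite /Hpsi !linearZ hjZ scalerDr !scalerA mulrC. Qed.

Let h_D x : Hh (D x) = r^-1 *: D (Hh x).
Proof. by rewrite rel_dh scalerA mulVf ?scale1r. Qed.

Lemma D_iter_h x : D (iter j Hh x) = r ^+ j *: iter j Hh (D x).
Proof.
rewrite (iter_scale_comm (linearZZ Hh) h_D) scalerA -exprMn mulfV //.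
by rewrite expr1n scale1r.
Qed.

Lemma Hpsi_iter_h x : Hpsi (iter j Hh x) = iter j Hh (Hpsi x).
Proof.
have h_Hpsi y : Hh (Hpsi y) = 1 *: Hpsi (Hh y).
  rewrite scale1r /Hpsi linearD linearZ rel_hu h_D linearZ scalerA mulfV //.
  by rewrite scale1r -iterS iterSr.
by rewrite (iter_scale_comm (linearZZ Hh) h_Hpsi) expr1n scale1r.
Qed.

Lemma D_U x : D (U x) = s *: Hpsi x - (C * r ^+ j) *: iter j Hh x.
Proof.
move/eqP: (rel_du x); rewrite subr_eq => /eqP ->.
by rewrite /Hpsi scalerDr scalerA mulrBr scalerBl [s * C]mulrC addrC addrA.
Qed.

Lemma D_Hpsi x : D (Hpsi x) = s *: Hpsi (D x).
Proof. by rewrite {1}/Hpsi linearD D_U (linearZZ D) D_iter_h scalerA subrK. Qed.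

Lemma iterD_U k x : iter k.+1 D (U x) =
  s ^+ k.+1 *: Hpsi (iter k D x) - (C * r ^+ j ^+ k.+1) *: iter j Hh (iter k D x).
Proof.
elim: k => [|k IH]; first by rewrite /= D_U !expr1.
rewrite iterS IH linearB !(linearZZ D) D_Hpsi D_iter_h !scalerA.
by rewrite -exprSr -mulrA -exprSr.
Qed.

Definition DU_poly k :=
  \prod_(i < k) (s ^+ i.+1 *: 'X - (C * r ^+ j ^+ i.+1)%:P).

Lemma size_DU_poly k : (size (DU_poly k) <= k.+1)%N.
Proof.
elim: k => [|k IH]; first by rewrite /DU_poly big_ord0 size_poly1.
have size_factor : (size (s ^+ k.+1 *: 'X - (C * r ^+ j ^+ k.+1)%:P)%R <= 2)%N.
  rewrite -mul_polyC -polyCN size_MXaddC; case: ifP => //= _.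
  by rewrite ltnS size_polyC_leq1.
rewrite /DU_poly big_ord_recr /= -/(DU_poly k).
by apply: leq_trans (size_polyMleq _ _) _; lia.
Qed.

Lemma iterD_iterU k x :
  iter k D (iter k U x) = homog_act Hpsi (iter j Hh) (DU_poly k) k x.
Proof.
elim: k x => [|k IH] x.
  by rewrite /homog_act big_ord1 /DU_poly big_ord0 coef1 scale1r.
rewrite [iter k.+1 U x]iterS iterD_U !IH /DU_poly big_ord_recr /= [in RHS]mulrC.
rewrite homog_actMXsubC ?size_DU_poly //.
- exact: HpsiD.
- exact: HpsiZ.
- exact: Hpsi_iter_h.
Qed.

Lemma iterD_U_comm m x : (0 < m)%N -> r ^+ (j * m) = s ^+ m ->
  iter m D (U x) = s ^+ m *: U (iter m D x).
Proof.
case: m => // m _ rs_m; rewrite iterD_U -exprM rs_m /Hpsi scalerDr scalerA.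
by rewrite [C * _]mulrC addrK.
Qed.

Lemma iterD_ker_stable m x : (0 < m)%N -> r ^+ (j * m) = s ^+ m ->
  iter m D x = 0 ->
  [/\ iter m D (U x) = 0, iter m D (D x) = 0 & iter m D (Hh x) = 0].
Proof.
move=> m_gt0 rs_m Dx0; split.
- by rewrite iterD_U_comm // Dx0 linear0 scaler0.
- by rewrite -iterSr iterS Dx0 linear0.
- by rewrite (iter_scale_comm (linearZZ D) rel_dh) Dx0 linear0 scaler0.
Qed.

End ConformalMonomial.

Unset Implicit Arguments.

Theorem mainTheorem12
  (K : closedFieldType) (charK : [pchar K] =i pred0)
  (r s : K) (r_nz : r != 0) (s_nz : s != 0)
  (phi psi : {poly K})
  (conf : forall x : K, s * psi.[x] - psi.[r * x] = phi.[x])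
  (not_both_roots : ~ (is_root_of_unity r /\ is_root_of_unity s))
  (j m : nat) (m_pos : (0 < m)%N)
  (S_gen : forall i k : int, r ^ i = s ^ k <->
                             exists t : int, i = t * (j * m)%N%:Z /\ k = t * m%:Z)
  (C : K) (C_nz : C != 0) (psi_def : psi = C *: 'X^j)
  (M : lmodType K) (U D Hh : {linear M -> M})
  (rel_hu : forall x, Hh (U x) = r *: U (Hh x))
  (rel_dh : forall x, D (Hh x) = r *: Hh (D x))
  (rel_du : forall x, D (U x) - s *: U (D x) = polyact phi Hh x)
  (simpleM : simple_rep U D Hh)
  (Hop := fun x : M => U (D x) + polyact psi Hh x)
  (hM : forall y : M, exists x, Hh x = y)
  (HM : forall y : M, exists x, Hop x = y)
  (ann : forall x : M, iter m Hop x - C ^+ m *: iter (j * m) Hh x = 0) :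
  (forall x : M, iter m U x = 0) \/ (forall x : M, iter m D x = 0).
Proof.
have phiE : phi = (C * (s - r ^+ j)) *: 'X^j.
  apply/eqP; rewrite -subr_eq0; apply/eqP/poly_eval_eq0_pchar0 => // x.
  rewrite !hornerE -conf psi_def !hornerZ !hornerXn exprMn.
  by rewrite mulrBr mulrBl !mulrA [s * C]mulrC subrr.
have {}rel_du x : D (U x) - s *: U (D x) = (C * (s - r ^+ j)) *: iter j Hh x.
  by rewrite rel_du phiE polyact_scaleXn.
have HopE : Hop =1 Hpsi C j U D Hh.
  by move=> x; rewrite /Hop psi_def polyact_scaleXn.
have prim := prim_root_of_lattice s_nz m_pos S_gen.
have rs_m : r ^+ (j * m) = s ^+ m.
  by apply/divr1_eq; rewrite exprM -expr_div_n (prim_expr_order prim).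
have DmUm0 x : iter m D (iter m U x) = 0.
  rewrite (iterD_iterU r_nz rel_hu rel_dh rel_du) /DU_poly.
  rewrite prod_scaled_XsubC_prim_root // homog_act_XnsubC // -iterM mulnC.
  by rewrite -(eq_iter HopE) ann scaler0.
have ker_stable x := iterD_ker_stable r_nz rel_dh rel_du (x := x) m_pos rs_m.
have [Dm_inj|Dm0] := simple_rep_ker_trivial simpleM
  (iter_morphD (linearD D) m) (iter_scalable (linearZZ D) m) ker_stable.
- by left=> x; apply: Dm_inj.
- by right.
Qed.
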